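(* Let $0<p<1$ and let $A\subseteq \mathbb{R}^n$. For every $x\in p\text{-conv}(A)$ with $x\neq 0$ there exist linearly independent vectors $P_1,\ldots,P_k\in A$ with $k\le n$ such that $x\in p\text{-conv}\{P_1,\ldots,P_k\}$. Moreover, if $0\in p\text{-conv}(A)$, then there exist $P_1,\ldots,P_k\in A$ with $k\le n+1$ such that $0\in p\text{-conv}\{P_1,\ldots,P_k\}$.
   Context: Let $0<p<1$ and let $X$ be a real vector space. A set $B\subseteq X$ is called $p$-convex if $\lambda x+\mu y\in B$ whenever $x,y\in B$ and $\lambda,\mu\ge 0$ with $\lambda^p+\mu^p=1$. For $A\subseteq X$, the $p$-convex hull $p\text{-conv}(A)$ is the intersection of all $p$-convex subsets of $X$ containing $A$. *)

From HB Require Import structures.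
From mathcomp Require Import all_boot all_order all_algebra.
From mathcomp Require Import all_classical all_reals all_analysis.
Set Implicit Arguments. Unset Strict Implicit. Unset Printing Implicit Defensive.
Import Order.TTheory GRing.Theory Num.Theory.
Local Open Scope classical_set_scope.
Local Open Scope ring_scope.

Definition pconvex (R : realType) (V : lmodType R) (p : R) (B : set V) : Prop :=
  forall x y (lam mu : R), B x -> B y -> 0 <= lam -> 0 <= mu ->
    lam `^ p + mu `^ p = 1 -> B (lam *: x + mu *: y).

Definition pconv (R : realType) (V : lmodType R) (p : R) (A : set V) : set V :=
  [set x | forall B : set V, pconvex p B -> A `<=` B -> B x].

(* A point of [pconv p A] is a p-combination [\sum_i lam_i a_i] of points
   [a_i] of [A] ([lam_i >= 0], [\sum_i lam_i^p = 1]), since such combinations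
   form a p-convex set containing [A].  Conversely, as [p < 1] a p-convex set
   is closed under the scalings [r *: _] with [0 < r <= 1], so any combination
   with [0 < \sum_i lam_i^p <= 1] lies in the p-convex hull of the [a_i].
   If the [a_i] are linearly dependent, [\sum_i al_i a_i = 0], shifting [lam]
   along [al] until a coefficient vanishes keeps the point, and by concavity of
   [t |-> t^p] one of the two directions does not increase [\sum_i lam_i^p];
   dropping that point and repeating leaves a free family.  For the point [0]
   the elimination is run on the points [(a_i, 1)] of [R^(n+1)], whose last
   coordinate [\sum_i lam_i > 0] keeps the reduced combination nontrivial. *)

From HB Require Import structures.
From mathcomp Require Import all_boot all_order all_algebra.
From mathcomp Require Import all_classical all_reals all_analysis.
From mathcomp Require Import ring lra.
Set Implicit Arguments. Unset Strict Implicit. Unset Printing Implicit Defensive.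
Import Order.TTheory GRing.Theory Num.Theory.
Import numFieldNormedType.Exports.
Local Open Scope classical_set_scope.
Local Open Scope ring_scope.

Lemma continuous_powR_max0 (R : realType) (q : R) : 0 < q ->
  continuous (fun x : R => Num.max x 0 `^ q).
Proof.
move=> q_gt0 x; have [x_lt0|x_gt0|->] := ltgtP x 0.
- apply: (near_cst_continuous 0); near=> y.
  have y_lt0 : y < 0 by near: y; exact: lt_nbhsl.
  by rewrite max_r ?ltW // powR0 // gt_eqF.
- have powR_cont : {for x, continuous (fun y : R => y `^ q)}.
    apply: differentiable_continuous; apply/(@derivable1_diffP R).
    by apply: derivable_powR; rewrite in_itv /= andbT.
  rewrite /continuous_at max_l ?ltW //; apply: cvg_trans powR_cont.
  apply: near_eq_cvg; near=> y.
  have y_gt0 : 0 < y by near: y; exact: lt_nbhsr.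
  by rewrite /= max_l // ltW.
- apply/cvgrPdist_lt => e e_gt0; set d := (e / 2) `^ q^-1.
  have d_gt0 : 0 < d by rewrite powR_gt0 // divr_gt0.
  near=> y; have y_lt : `|y| < d.
    by near: y; exists d => //= z /=; rewrite sub0r normrN.
  rewrite max_r // powR0 ?gt_eqF // sub0r normrN ger0_norm ?powR_ge0 //.
  apply: (@le_lt_trans _ _ (d `^ q)).
    apply: ge0_ler_powR; rewrite ?nnegrE ?le_max ?lexx ?orbT ?powR_ge0 ?ltW //.
    by rewrite gt_max d_gt0 andbT; exact: le_lt_trans (ler_norm y) y_lt.
  rewrite -powRrM mulVf ?gt_eqF // powRr1 ?divr_ge0 ?ltW //.
  by rewrite ltr_pdivrMr ?ltr_pMr ?ltr1n.
Unshelve. all: by end_near.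
Qed.

Lemma two_half_powR_lt1 (R : realType) (p : R) : 0 < p -> p < 1 ->
  2 * 2^-1 `^ p^-1 < 1.
Proof.
move=> p_gt0 p_lt1; have half_gt0 : (0 : R) < 2^-1 by rewrite invr_gt0 ltr0n.
have ln_half_lt0 : ln (2^-1 : R) < 0 by rewrite ln_lt0 // half_gt0 invf_lt1 ?ltr1n.
rewrite /powR gt_eqF // -ltr_pdivlMl ?ltr0n // mulr1 -[X in _ < X]lnK ?posrE //.
by rewrite ltr_expR gtr_nMl // invf_gt1.
Qed.

Lemma psum_powR_normalize (R : realType) (p : R) m (lam : 'I_m -> R) :
  0 < p -> (forall i, 0 <= lam i) -> 0 < \sum_i lam i `^ p ->
  \sum_i (lam i / (\sum_j lam j `^ p) `^ p^-1) `^ p = 1.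
Proof.
move=> p_gt0 lam_ge0; set w := \sum_j _ => w_gt0.
set s := w `^ p^-1; have s_gt0 : 0 < s by rewrite powR_gt0.
have sp : s `^ p = w by rewrite -powRrM mulVf ?gt_eqF // powRr1 ?ltW.
apply: (mulIf (lt0r_neq0 w_gt0)); rewrite mul1r big_distrl /= -[in LHS]sp /w.
by apply: eq_bigr => i _; rewrite -powRM ?divr_ge0 ?lam_ge0 ?(ltW s_gt0) // divfK ?gt_eqF.
Qed.

Lemma psum_powR_eq0 (R : realType) (p : R) m (lam : 'I_m -> R) :
  \sum_i lam i `^ p = 0 -> forall i, lam i = 0.
Proof.
move=> sum0 i; apply: (@powR_eq0_eq0 _ _ p).
by apply: (psumr_eq0P (P := predT) (F := fun i => lam i `^ p)) => // j _; exact: powR_ge0.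
Qed.

Section PConvexSet.
Variables (R : realType) (V : lmodType R) (p : R) (B : set V).
Hypotheses (p_gt0 : 0 < p) (p_lt1 : p < 1) (B_pconvex : pconvex p B).

Lemma pconvex_scale_pair y t : B y -> 0 <= t <= 1 ->
  B ((t `^ p^-1 + (1 - t) `^ p^-1) *: y).
Proof.
move=> By /andP[t_ge0 t_le1]; rewrite scalerDl.
apply: B_pconvex; rewrite ?powR_ge0 //.
by rewrite -!powRrM mulVf ?gt_eqF // !powRr1 ?subr_ge0 // addrC subrK.
Qed.

(* [t |-> t^(1/p) + (1 - t)^(1/p)] takes the value 1 at [t = 0] and
   [2 * 2^(-1/p) < 1] at [t = 1/2]. *)
Lemma pconvex_scale_ge y r : B y -> 2 * 2^-1 `^ p^-1 <= r <= 1 -> B (r *: y).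
Proof.
move=> By r_bnd.
pose g t := Num.max t 0 `^ p^-1; pose f t := g t + g (1 - t).
have g_cont : continuous g by apply: continuous_powR_max0; rewrite invr_gt0.
have f_cont : continuous f.
  move=> t; apply: continuousD; first exact: g_cont.
  apply: (continuous_comp (f := fun t : R => 1 - t)); last exact: g_cont.
  by apply: continuousB; [exact: cst_continuous | exact: cvg_id].
have half_ge0 : (0 : R) <= 2^-1 by rewrite invr_ge0 ler0n.
have [t] : exists2 t, t \in `[0, 2^-1] & f t = r.
  apply: IVT => //; first exact: continuous_subspaceT.
  have -> : f 0 = 1.
    by rewrite /f /g subr0 max_r // max_l // powR0 ?powR1 ?add0r ?invr_neq0 ?gt_eqF.
  have -> : f 2^-1 = 2 * 2^-1 `^ p^-1.
    by rewrite /f /g {2}[1](splitr 1) div1r addrK max_l // mulr2n mulrDl mul1r.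
  have c_lt1 := two_half_powR_lt1 p_gt0 p_lt1.
  by rewrite (min_r (ltW c_lt1)) (max_l (ltW c_lt1)).
rewrite in_itv /= => /andP[t_ge0 t_le_half] <-.
have t_le1 : t <= 1 by apply: le_trans t_le_half _; rewrite invf_le1 ?ler1n ?ltr0n.
by rewrite /f /g !max_l ?subr_ge0 //; apply: pconvex_scale_pair; rewrite ?t_ge0.
Qed.

Lemma pconvex_scale y s : B y -> 0 < s <= 1 -> B (s *: y).
Proof.
move=> By /andP[s_gt0 s_le1]; set c := 2 * 2^-1 `^ p^-1.
have c_lt1 : c < 1 := two_half_powR_lt1 p_gt0 p_lt1.
have c_gt0 : 0 < c by rewrite mulr_gt0 // powR_gt0 // invr_gt0 ltr0n.
have scale_pow k r : c ^+ k <= r <= 1 -> B (r *: y).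
  elim: k r => [|k IHk] r /andP[r_ge r_le1].
    by rewrite (@le_anti _ _ r 1) ?r_le1 ?scale1r.
  have [c_le_r|r_lt_c] := leP c r; first by apply: pconvex_scale_ge => //; apply/andP.
  rewrite -[r](divfK (lt0r_neq0 c_gt0)) mulrC -scalerA.
  apply: pconvex_scale_ge; last by rewrite -/c lexx ltW.
  by apply: IHk; rewrite ler_pdivrMr // mul1r ler_pdivlMr // -exprSr r_ge ltW.
have c_norm_lt1 : `|c| < 1 by rewrite ger0_norm ?ltW.
have [k _ c_pow_lt] : \forall k \near \oo, c ^+ k < s.
  have /cvgrPdist_lt/(_ s s_gt0) := cvg_expr c_norm_lt1.
  by apply: filterS => k; rewrite sub0r normrN ger0_norm ?exprn_ge0 ?ltW.
by apply: (scale_pow k); rewrite s_le1 andbT ltW //; apply: c_pow_lt => /=.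
Qed.

Lemma pconvex_psum m (lam : 'I_m -> R) (a : 'I_m -> V) :
  (forall i, B (a i)) -> (forall i, 0 <= lam i) -> \sum_i lam i `^ p = 1 ->
  B (\sum_i lam i *: a i).
Proof.
elim: m lam a => [|m IHm] lam a Ba lam_ge0.
  by rewrite big_ord0 => /esym/eqP; rewrite oner_eq0.
rewrite !big_ord_recl; set r := \sum_(i < m) _ => sum1.
have [r_gt0|r_le0] := ltP 0 r; last first.
  have r_eq0 : r = 0.
    by apply/le_anti; rewrite r_le0 sumr_ge0 // => i _; exact: powR_ge0.
  have tail0 i : lam (lift ord0 i) = 0 by exact: psum_powR_eq0 r_eq0 i.
  rewrite big1 => [|i _]; last by rewrite tail0 scale0r.
  rewrite -[X in B (_ + X)](scale0r (a ord0)).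
  by apply: B_pconvex; rewrite ?lexx // powR0 ?gt_eqF // addr0 -sum1 r_eq0 addr0.
set s := r `^ p^-1; have s_gt0 : 0 < s by rewrite powR_gt0.
have sp : s `^ p = r by rewrite -powRrM mulVf ?gt_eqF // powRr1 ?ltW.
have -> : \sum_(i < m) lam (lift ord0 i) *: a (lift ord0 i) =
          s *: \sum_(i < m) (lam (lift ord0 i) / s) *: a (lift ord0 i).
  rewrite scaler_sumr; apply: eq_bigr => i _.
  by rewrite scalerA mulrC divfK ?gt_eqF.
apply: B_pconvex; rewrite ?lam_ge0 ?ltW ?sp //.
apply: IHm => [i|i|]; rewrite ?Ba ?divr_ge0 ?lam_ge0 ?ltW //.
exact: psum_powR_normalize.
Qed.

End PConvexSet.

Lemma pcomb_in_pconv (R : realType) (V : lmodType R) (p : R) m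
    (lam : 'I_m -> R) (a : 'I_m -> V) :
  0 < p -> p < 1 -> (forall i, 0 <= lam i) ->
  0 < \sum_i lam i `^ p -> \sum_i lam i `^ p <= 1 ->
  pconv p (range a) (\sum_i lam i *: a i).
Proof.
move=> p_gt0 p_lt1 lam_ge0 w_gt0 w_le1 B B_pconvex aB.
set s := (\sum_i lam i `^ p) `^ p^-1.
have s_gt0 : 0 < s by rewrite powR_gt0.
have s_le1 : s <= 1.
  suff : s <= 1 `^ p^-1 by rewrite powR1.
  by apply: ge0_ler_powR w_le1; rewrite ?nnegrE ?invr_ge0 ?ltW.
have -> : \sum_i lam i *: a i = s *: \sum_i (lam i / s) *: a i.
  by rewrite scaler_sumr; apply: eq_bigr => i _; rewrite scalerA mulrC divfK ?gt_eqF.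
apply: (pconvex_scale p_gt0 p_lt1 B_pconvex); last by rewrite s_gt0 s_le1.
apply: (pconvex_psum p_gt0 B_pconvex) => [i|i|]; first exact/aB/imageT.
- by rewrite divr_ge0 ?lam_ge0 ?ltW.
- exact: psum_powR_normalize.
Qed.

Lemma split_lshift m n (i : 'I_m) : fintype.split (lshift n i) = inl i.
Proof. exact: (unsplitK (inl i)). Qed.

Lemma split_rshift m n (i : 'I_n) : fintype.split (rshift m i) = inr i.
Proof. exact: (unsplitK (inr i)). Qed.

Section PCombinations.
Variables (R : realType) (V : lmodType R) (p : R).

Definition pcombs (A : set V) : set V :=
  [set x | exists m (lam : 'I_m -> R) (a : 'I_m -> V),
     [/\ forall i, A (a i), forall i, 0 <= lam i,
         \sum_i lam i `^ p = 1 & x = \sum_i lam i *: a i]].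

Lemma pcombs_pconvex A : 0 < p -> pconvex p (pcombs A).
Proof.
move=> p_gt0 _ _ l1 l2 [m1 [lam1 [a1 [Aa1 lam1_ge0 sum1 ->]]]]
  [m2 [lam2 [a2 [Aa2 lam2_ge0 sum2 ->]]]] l1_ge0 l2_ge0 sum12.
pose glue T (f1 : 'I_m1 -> T) (f2 : 'I_m2 -> T) i :=
  match fintype.split i with inl j => f1 j | inr j => f2 j end.
exists (m1 + m2)%N, (glue _ (fun j => l1 * lam1 j) (fun j => l2 * lam2 j)).
exists (glue _ a1 a2).
split => [i|i||]; rewrite /glue.
- by case: fintype.split.
- by case: fintype.split => j; apply: mulr_ge0.
- rewrite big_split_ord /=.
  under eq_bigr do rewrite split_lshift powRM //.
  under [X in _ + X]eq_bigr do rewrite split_rshift powRM //.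
  by rewrite -!mulr_sumr sum1 sum2 !mulr1.
- rewrite big_split_ord /=.
  under [X in _ = X + _]eq_bigr do rewrite split_lshift -scalerA.
  under [X in _ = _ + X]eq_bigr do rewrite split_rshift -scalerA.
  by rewrite -!scaler_sumr.
Qed.

Lemma pconv_sub_pcombs A : 0 < p -> pconv p A `<=` pcombs A.
Proof.
move=> p_gt0 x; apply; first exact: pcombs_pconvex.
move=> y Ay; exists 1%N, (fun=> 1), (fun=> y).
by rewrite big_ord1 powR1 big_ord1 scale1r.
Qed.

End PCombinations.

Lemma concave_powR (R : realType) (p u v w : R) : 0 < p -> p <= 1 ->
  0 <= u -> 0 <= v -> 0 <= w <= 1 ->
  w * u `^ p + (1 - w) * v `^ p <= (w * u + (1 - w) * v) `^ p.
Proof.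
move=> p_gt0 p_le1 u_ge0 v_ge0 /andP[w_ge0 w_le1].
have pV_ge1 : 1 <= p^-1 by rewrite invf_ge1.
have := @convex_powR R _ pV_ge1 (Itv01 w_ge0 w_le1) (u `^ p) (v `^ p).
rewrite !inE /= !in_itv /= !powR_ge0 => /(_ isT isT).
rewrite !convRE /= -!powRrM !mulfV ?gt_eqF // !powRr1 // => conv_le.
set L := w * _ + _.
have L_ge0 : 0 <= L by rewrite addr_ge0 // mulr_ge0 ?powR_ge0 ?subr_ge0.
have -> : L = (L `^ p^-1) `^ p by rewrite -powRrM mulVf ?gt_eqF // powRr1.
apply: ge0_ler_powR conv_le; rewrite ?nnegrE ?powR_ge0 ?(ltW p_gt0) //.
by rewrite addr_ge0 // mulr_ge0 ?subr_ge0.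
Qed.

Lemma exists_vanishing_shift (R : realType) m (lam al : 'I_m -> R) :
  (forall i, 0 <= lam i) -> (exists i, 0 < al i) ->
  exists t, [/\ 0 <= t, forall i, 0 <= lam i - t * al i
              & exists j, lam j - t * al j = 0].
Proof.
move=> lam_ge0 [i0 al_i0_gt0].
have [j al_j_gt0 j_min] :=
  arg_minP (P := fun i => 0 < al i) (fun i => lam i / al i) al_i0_gt0.
exists (lam j / al j); split; last by exists j; rewrite divfK ?subrr ?gt_eqF.
- by rewrite divr_ge0 ?lam_ge0 ?ltW.
move=> i; rewrite subr_ge0; have [al_i_gt0|al_i_le0] := ltP 0 (al i).
  by rewrite -ler_pdivlMr // j_min.
by rewrite (le_trans _ (lam_ge0 i)) // mulr_ge0_le0 // divr_ge0 ?lam_ge0 ?ltW.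
Qed.

Lemma exists_vanishing_shift_psum_le (R : realType) (p : R) m (lam al : 'I_m -> R) :
  0 < p -> p <= 1 -> (forall i, 0 <= lam i) -> (exists i, al i != 0) ->
  exists t, [/\ forall i, 0 <= lam i - t * al i, exists j, lam j - t * al j = 0
              & \sum_i (lam i - t * al i) `^ p <= \sum_i lam i `^ p].
Proof.
move=> p_gt0 p_le1 lam_ge0 [i0 al_i0_neq0].
wlog al_i0_gt0 : al al_i0_neq0 / 0 < al i0.
  move=> wlog; move: al_i0_neq0; rewrite neq_lt => /orP[al_i0_lt0|]; last first.
    by move=> al_i0_gt0; apply: wlog; rewrite ?gt_eqF.
  have [||t [shift_ge0 [j shift_j] psum_le]] := wlog (fun i => - al i).
  - by rewrite oppr_eq0 lt_eqF.
  - by rewrite oppr_gt0.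
  exists (- t); split; last by under eq_bigr do rewrite mulNr -mulrN.
  - by move=> i; rewrite mulNr -mulrN.
  - by exists j; rewrite mulNr -mulrN.
have al_pos : exists i, 0 < al i by exists i0.
have [t1 [t1_ge0 u_ge0 u_vanish]] := exists_vanishing_shift lam_ge0 al_pos.
pose u i := lam i - t1 * al i; have {}u_ge0 i : 0 <= u i := u_ge0 i.
have [/existsP[i1 al_i1_lt0]|/existsPn al_ge0] := boolP [exists i, al i < 0]; last first.
  exists t1; split => //; apply: ler_sum => i _.
  apply: ge0_ler_powR; rewrite ?nnegrE ?u_ge0 ?lam_ge0 ?(ltW p_gt0) //.
  by rewrite gerBl mulr_ge0 // leNgt al_ge0.
have [|t2 [t2_ge0 v_ge0 v_vanish]] :=
  exists_vanishing_shift lam_ge0 (al := fun i => - al i).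
  by exists i1; rewrite oppr_gt0.
pose v i := lam i + t2 * al i.
have {}v_ge0 i : 0 <= v i by move: (v_ge0 i); rewrite mulrN opprK.
have {}v_vanish : exists j, v j = 0.
  by have [j v_j] := v_vanish; exists j; move: v_j; rewrite mulrN opprK.
have [t12_eq0|t12_neq0] := eqVneq (t1 + t2) 0.
  have t1_eq0 : t1 = 0 by apply/le_anti; rewrite t1_ge0 -t12_eq0 lerDl t2_ge0.
  by exists t1; split => //; apply: ler_sum => i _; rewrite t1_eq0 mul0r subr0.
set w := t2 / (t1 + t2).
have w_bnd : 0 <= w <= 1.
  by rewrite divr_ge0 ?addr_ge0 // ler_pdivrMr ?lt_def ?t12_neq0 ?addr_ge0 // mul1r lerDr.
have lam_mid i : lam i = w * u i + (1 - w) * v i by rewrite /u /v /w; field.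
have concave_le : w * \sum_i u i `^ p + (1 - w) * \sum_i v i `^ p <= \sum_i lam i `^ p.
  rewrite !mulr_sumr -big_split /=; apply: ler_sum => i _.
  by rewrite [in leRHS]lam_mid; apply: concave_powR.
have [uv_le|vu_lt] := leP (\sum_i u i `^ p) (\sum_i v i `^ p).
  exists t1; split => //; change (\sum_i u i `^ p <= \sum_i lam i `^ p).
  by move: w_bnd => /andP[? ?]; nra.
exists (- t2); split.
- by move=> i; rewrite mulNr opprK; exact: v_ge0.
- by have [j v_j] := v_vanish; exists j; rewrite mulNr opprK.
under eq_bigr do rewrite mulNr opprK; change (\sum_i v i `^ p <= \sum_i lam i `^ p).
by move: w_bnd => /andP[? ?]; nra.
Qed.

Lemma psum_powR_gt0 (R : realType) (V : lmodType R) (p : R) m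
    (lam : 'I_m -> R) (a : 'I_m -> V) :
  \sum_i lam i *: a i != 0 -> 0 < \sum_i lam i `^ p.
Proof.
apply: contraR; rewrite -leNgt => psum_le0.
have psum0 : \sum_i lam i `^ p = 0.
  by apply/le_anti; rewrite psum_le0 sumr_ge0 // => i _; exact: powR_ge0.
by rewrite big1 // => i _; rewrite (psum_powR_eq0 psum0) scale0r.
Qed.

Section FreeSubfamily.
Variables (R : realType) (V : vectType R).

Lemma free_size_le_dim (X : seq V) : free X -> (size X <= \dim {:V})%N.
Proof. by move/eqP <-; apply: dimvS; exact: subvf. Qed.

Lemma not_free_lin_dep m (a : 'I_m -> V) : ~~ free [seq a i | i <- enum 'I_m] ->
  exists2 al : 'I_m -> R, \sum_i al i *: a i = 0 & exists i, al i != 0.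
Proof.
move=> not_free; apply: contrapT => no_dep.
have : free (map_tuple a (ord_tuple m)); last by move/negP: not_free.
apply/freeP => al al_rel i; apply: contrapT => /eqP al_i_neq0.
apply: no_dep; exists al; last by exists i.
apply: etrans al_rel; apply: eq_bigr => j _.
by rewrite (nth_map j) ?size_enum_ord // nth_ord_enum.
Qed.

Lemma pcomb_free_subfamily (p : R) m (lam : 'I_m -> R) (a : 'I_m -> V) :
  0 < p -> p <= 1 -> (forall i, 0 <= lam i) ->
  exists k (mu : 'I_k -> R) (b : 'I_k -> V),
    [/\ free [seq b i | i <- enum 'I_k], range b `<=` range a,
        forall i, 0 <= mu i, \sum_i mu i `^ p <= \sum_i lam i `^ p
      & \sum_i mu i *: b i = \sum_i lam i *: a i].
Proof.
move=> p_gt0 p_le1; elim: m lam a => [|m IHm] lam a lam_ge0.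
  by exists 0%N, lam, a; split => //; rewrite enum_ord0 nil_free.
have [a_free|a_dep] := boolP (free [seq a i | i <- enum 'I_m.+1]).
  by exists m.+1, lam, a; split.
have [al al_rel al_nz] := not_free_lin_dep a_dep.
have [t [lamt_ge0 [j lamt_j] psum_le]] :=
  exists_vanishing_shift_psum_le p_gt0 p_le1 lam_ge0 al_nz.
have [k [mu [b [b_free b_sub mu_ge0 mu_le mu_eq]]]] :=
  IHm (fun i => lam (lift j i) - t * al (lift j i)) (fun i => a (lift j i))
    (fun i => lamt_ge0 _).
exists k, mu, b; split => //.
- by apply: subset_trans b_sub _ => _ [i _ <-]; exact: imageT.
- apply: (le_trans mu_le); apply: le_trans psum_le.
  by rewrite [leRHS](bigD1_ord j) //= lamt_j powR0 ?gt_eqF ?add0r.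
- have -> : \sum_i lam i *: a i = \sum_i (lam i - t * al i) *: a i.
    under [RHS]eq_bigr do rewrite scalerBl -scalerA.
    by rewrite sumrB -scaler_sumr al_rel scaler0 subr0.
  by rewrite mu_eq [RHS](bigD1_ord j) //= lamt_j scale0r add0r.
Qed.

End FreeSubfamily.

Lemma pconv_free_support (R : realType) (V : vectType R) (p : R) (A : set V) x :
  0 < p -> p < 1 -> pconv p A x -> x != 0 ->
  exists k (P : 'I_k -> V), [/\ (k <= \dim {:V})%N, forall i, A (P i),
    free [seq P i | i <- enum 'I_k] & pconv p (range P) x].
Proof.
move=> p_gt0 p_lt1 /(pconv_sub_pcombs p_gt0) [m [lam [a [Aa lam_ge0 psum1 ->]]]].
have [k [mu [b [b_free b_sub mu_ge0 mu_le mu_eq]]]] :=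
  pcomb_free_subfamily a p_gt0 (ltW p_lt1) lam_ge0.
rewrite -mu_eq => x_neq0; exists k, b; split => //.
- by have := free_size_le_dim b_free; rewrite size_map size_enum_ord.
- by move=> i; have [j _ <-] := b_sub _ (imageT b i).
- apply: pcomb_in_pconv => //; [exact: psum_powR_gt0 x_neq0 | by rewrite -psum1].
Qed.

Lemma pconv0_support (R : realType) n (p : R) (A : set 'rV[R]_n) :
  0 < p -> p < 1 -> pconv p A 0 ->
  exists k (P : 'I_k -> 'rV[R]_n),
    [/\ (k <= n.+1)%N, forall i, A (P i) & pconv p (range P) 0].
Proof.
move=> p_gt0 p_lt1 /(pconv_sub_pcombs p_gt0) [m [lam [a [Aa lam_ge0 psum1 sum0]]]].
pose a1 i : 'rV[R]_(n + 1) := row_mx (a i) (const_mx 1).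
have [k [mu [b [b_free b_sub mu_ge0 mu_le mu_eq]]]] :=
  pcomb_free_subfamily a1 p_gt0 (ltW p_lt1) lam_ge0.
have sum_a1_neq0 : \sum_i lam i *: a1 i != 0.
  apply/eqP => /(congr1 (fun v => rsubmx v 0 0)).
  rewrite linear_sum linear0 /= summxE !mxE.
  under eq_bigr do rewrite linearZ /= row_mxKr !mxE mulr1.
  move=> /(psumr_eq0P (P := predT) (fun i _ => lam_ge0 i)) lam0.
  by move: psum1; rewrite big1 => [/esym/eqP|i _]; rewrite ?oner_eq0 ?lam0 ?powR0 ?gt_eqF.
exists k, (fun i => lsubmx (b i)); split.
- have := free_size_le_dim b_free.
  by rewrite size_map size_enum_ord dimvf dim_matrix mul1r addn1.
- by move=> i; have [j _ <-] := b_sub _ (imageT b i); rewrite row_mxKl.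
have <- : \sum_i mu i *: lsubmx (b i) = 0.
  rewrite [RHS]sum0; under eq_bigr do rewrite -linearZ.
  rewrite -linear_sum mu_eq linear_sum; apply: eq_bigr => i _.
  by rewrite linearZ /= row_mxKl.
apply: pcomb_in_pconv => //; last by rewrite -psum1.
by apply: (@psum_powR_gt0 _ _ _ _ _ b); rewrite mu_eq.
Qed.

Unset Implicit Arguments.
Set Strict Implicit.

Theorem theorem1 (R : realType) (n : nat) (p : R) (hp0 : 0 < p) (hp1 : p < 1)
    (A : set 'rV[R]_n) :
  (forall x : 'rV[R]_n, pconv p A x -> x != 0 ->
     exists (k : nat) (P : 'I_k -> 'rV[R]_n),
       [/\ (k <= n)%N, (forall i, A (P i)),
           free [seq P i | i <- enum 'I_k] & pconv p (range P) x])
  /\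
  (pconv p A 0 ->
     exists (k : nat) (P : 'I_k -> 'rV[R]_n),
       [/\ (k <= n.+1)%N, (forall i, A (P i)) & pconv p (range P) 0]).
Proof.
split; last exact: pconv0_support.
move=> x x_in x_neq0; have := pconv_free_support hp0 hp1 x_in x_neq0.
by rewrite dimvf dim_matrix mul1r.
Qed.
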